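(* Let $T$ be a triangulation of the oriented 2-sphere (a simplicial complex), $R$ its vertex–edge incidence matrix ($R_{v,e}=1$ if $v\in e$, else $0$), and $E$ the edge–edge matrix defined below. Then $R\cdot E=0$.
   Context: $E=(E_{e,e'})_{e,e'\in\mathcal E(T)}$: if $e\neq e'$ lie in a common face whose edges in positive cyclic order are $\{a,b\},\{b,c\},\{c,a\}$, then $E_{e,e'}=-1$ if $e'$ immediately follows $e$ and $+1$ if $e'$ immediately precedes $e$; otherwise $E_{e,e'}=0$. *)

From mathcomp Require Import all_boot all_order all_algebra.
Set Implicit Arguments. Unset Strict Implicit. Unset Printing Implicit Defensive.
Import GRing.Theory Num.Theory.
Local Open Scope ring_scope.

Section Triang.
Variable V : finType.

(* A 2-dimensional simplicial complex on vertex set V is given by its set of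
   triangles F (2-simplices); its edges are the 2-element subsets of triangles. *)
Definition edges (F : {set {set V}}) : {set {set V}} :=
  [set e : {set V} | (#|e| == 2)%N && [exists f in F, e \subset f]].

Definition vadj (F : {set {set V}}) : rel V :=
  fun u w => [exists f in F, (u \in f) && (w \in f)].

Definition linkrel (F : {set {set V}}) (v : V) : rel V :=
  fun u w => [set u; v; w] \in F.

Definition in_link (F : {set {set V}}) (v u : V) : bool :=
  (u != v) && [exists f in F, (u \in f) && (v \in f)].

(* Combinatorial triangulation of the 2-sphere: a pure 2-dimensional finite
   simplicial complex with vertex set V which is a closed combinatorial surface
   (every edge in exactly two triangles, every vertex link a single cycle),
   connected, with Euler characteristic 2. *)
Definition sphere_triangulation (F : {set {set V}}) : Prop :=
  [/\ forall f, f \in F -> #|f| = 3%N,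
      forall v : V, (exists2 f, f \in F & v \in f),
      forall e, e \in edges F -> #|[set f in F | e \subset f]| = 2%N,
      forall v u w, in_link F v u -> in_link F v w -> connect (linkrel F v) u w
    & [/\ forall u w : V, connect (vadj F) u w
        & (#|V|%:Z - #|edges F|%:Z + #|F|%:Z = 2)%R]].

(* oriented triangle (a,b,c) = triangle {a,b,c} with cyclic order a -> b -> c *)
Definition face_of (t : V * V * V) : {set V} := [set t.1.1; t.1.2; t.2].

(* An orientation: for every triangle the set of ordered triples listing it in
   its positive cyclic order (closed under cyclic rotation, exactly one of the
   two cyclic orders), coherent: each directed edge (a,b) is traversed by at most
   one positively oriented triangle. *)
Definition orientation (F : {set {set V}}) (O : {set V * V * V}) : Prop :=
  [/\ forall t, t \in O -> face_of t \in F,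
      forall f, f \in F -> exists2 t, t \in O & face_of t = f,
      forall a b c, (a, b, c) \in O -> (b, c, a) \in O,
      forall a b c, (a, b, c) \in O -> (a, c, b) \notin O
    & forall a b c c', (a, b, c) \in O -> (a, b, c') \in O -> c = c'].

Definition incR (v : V) (e : {set V}) : int := (v \in e)%:R.

Definition edgeE (O : {set V * V * V}) (e e' : {set V}) : int :=
  if [exists t in O, (e == [set t.1.1; t.1.2]) && (e' == [set t.1.2; t.2])]
  then -1
  else if [exists t in O, (e' == [set t.1.1; t.1.2]) && (e == [set t.1.2; t.2])]
  then 1 else 0.

End Triang.

From mathcomp Require Import all_boot all_order all_algebra.
From mathcomp Require Import ring.
Set Implicit Arguments. Unset Strict Implicit. Unset Printing Implicit Defensive.
Import GRing.Theory Num.Theory.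
Local Open Scope ring_scope.

(* An edge {x,y} lies in exactly two triangles, and coherence forces them to
   be oriented (x,y,c) and (y,x,d).  Hence the column of E at {x,y} is
   [{y,c}] + [{x,d}] - [{c,x}] - [{d,y}], and applying R sends each edge
   {a,b} to [a] + [b]; every vertex then appears once with each sign. *)

Lemma cards3_neq (V : finType) (a b c : V) :
  #|[set a; b; c]| = 3%N -> [/\ a != b, b != c & a != c].
Proof.
rewrite -setUA cardsU1 cards2 !inE negb_or.
by case: (a == b); case: (a == c); case: (b == c).
Qed.

Lemma set3_rotl (V : finType) (a b c : V) : [set a; b; c] = [set b; c; a].
Proof. by apply/setP => z; rewrite !inE -orbA orbC. Qed.

Lemma set2_eq_cases (V : finType) (a b x y : V) : x != y ->
  [set a; b] = [set x; y] -> (a = x /\ b = y) \/ (a = y /\ b = x).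
Proof.
move=> xy eq_ab.
have /set2P[] : a \in [set x; y] by rewrite -eq_ab set21.
- move=> ax; have /set2P[] : b \in [set x; y] by rewrite -eq_ab set22.
  + move=> bx; have : y \in [set a; b] by rewrite eq_ab set22.
    by rewrite ax bx !inE orbb eq_sym (negbTE xy).
  + by left.
- move=> ay; have /set2P[] : b \in [set x; y] by rewrite -eq_ab set22.
  + by right.
  + move=> by_; have : x \in [set a; b] by rewrite eq_ab set21.
    by rewrite ay by_ !inE orbb (negbTE xy).
Qed.

Lemma set2_in_edges (V : finType) (F : {set {set V}}) f a b :
  f \in F -> a \in f -> b \in f -> a != b -> [set a; b] \in edges F.
Proof.
move=> fF af bf ab; rewrite inE cards2 ab /=; apply/existsP; exists f.
by rewrite fF; apply/subsetP => z /set2P[] ->.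
Qed.

Lemma sum_mul_indicator (T : finType) (R : pzSemiRingType) (A S : {set T}) (g : T -> R) :
  S \subset A -> \sum_(e in A) g e * (e \in S)%:R = \sum_(e in S) g e.
Proof.
move=> sSA; rewrite (big_setID S) /= (setIidPr sSA).
rewrite [X in _ + X]big1 ?addr0 => [|e /setDP[_ /negbTE ->]]; last by rewrite mulr0.
by apply: eq_bigr => e ->; rewrite mulr1.
Qed.

Lemma sum_set2 (T : finType) (R : nmodType) (p q : T) (g : T -> R) :
  p != q -> \sum_(e in [set p; q]) g e = g p + g q.
Proof. by move=> pq; rewrite big_setU1 ?big_set1 // inE. Qed.

Lemma incR_set2 (V : finType) (v a b : V) :
  a != b -> incR v [set a; b] = (v == a)%:R + (v == b)%:R.
Proof.
move=> ab; rewrite /incR !inE.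
by case: eqP => [-> | _]; rewrite ?(negbTE ab) ?addr0 ?add0r.
Qed.

Section OrientedTriangulation.
Variables (V : finType) (F : {set {set V}}) (O : {set V * V * V}).
Hypothesis F_card3 : forall f, f \in F -> #|f| = 3%N.
Hypothesis O_orient : orientation F O.

Lemma orient_rotr a b c : (a, b, c) \in O -> (c, a, b) \in O.
Proof. by case: O_orient => _ _ Orot _ _ /Orot /Orot. Qed.

Lemma orient_neq a b c : (a, b, c) \in O -> [/\ a != b, b != c & a != c].
Proof. by case: O_orient => Of _ _ _ _ /Of /F_card3 /cards3_neq. Qed.

Lemma orient_face f x y : f \in F -> x \in f -> y \in f -> x != y ->
  (exists2 z, (x, y, z) \in O & face_of (x, y, z) = f) \/
  (exists2 z, (y, x, z) \in O & face_of (y, x, z) = f).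
Proof.
case: O_orient => _ Oex Orot _ _ /Oex[[[a b] c] abcO <-].
have /orient_neq[ab bc ac] := abcO.
have bcaO := Orot _ _ _ abcO; have cabO := Orot _ _ _ bcaO.
rewrite /face_of /= !inE.
case/orP=> [/orP[]|] /eqP ->; case/orP=> [/orP[]|] /eqP -> //; rewrite ?eqxx // => _.
- by left; exists c.
- by right; exists b; rewrite // /face_of /= set3_rotl.
- by right; exists c.
- by left; exists a; rewrite // /face_of /= -set3_rotl.
- by left; exists b; rewrite // /face_of /= set3_rotl.
- by right; exists a; rewrite // /face_of /= -set3_rotl.
Qed.

Lemma edge_opposite_faces e : e \in edges F ->
  #|[set f in F | e \subset f]| = 2%N ->
  exists x y c d, [/\ e = [set x; y], (x, y, c) \in O & (y, x, d) \in O].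
Proof.
case: O_orient => _ _ _ _ Ocoh.
rewrite inE => /andP[/cards2P[x [y [xy ->]]] _] /eqP/cards2P[f1 [f2 [f12 faces_e]]].
have : f1 \in [set f in F | [set x; y] \subset f] by rewrite faces_e set21.
rewrite inE => /andP[f1F /subsetP s1].
have : f2 \in [set f in F | [set x; y] \subset f] by rewrite faces_e set22.
rewrite inE => /andP[f2F /subsetP s2].
have o1 := orient_face f1F (s1 _ (set21 _ _)) (s1 _ (set22 _ _)) xy.
have o2 := orient_face f2F (s2 _ (set21 _ _)) (s2 _ (set22 _ _)) xy.
move: f12; case: o1 o2 => -[p pO <-] [] [q qO <-].
- by rewrite (Ocoh _ _ _ _ pO qO) eqxx.
- by move=> _; exists x, y, p, q.
- by move=> _; exists x, y, q, p.
- by rewrite (Ocoh _ _ _ _ pO qO) eqxx.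
Qed.

Variables x y c d : V.
Hypotheses (xycO : (x, y, c) \in O) (yxdO : (y, x, d) \in O).

Lemma apexes_neq : c != d.
Proof.
case: O_orient => _ _ _ Oanti _.
apply/eqP => cd; move: (Oanti _ _ _ (orient_rotr xycO)).
by rewrite cd (orient_rotr yxdO).
Qed.

Definition edges_before : {set {set V}} := [set [set c; x]; [set d; y]].
Definition edges_after : {set {set V}} := [set [set y; c]; [set x; d]].

Lemma edge_precedesE e :
  [exists t in O, (e == [set t.1.1; t.1.2]) && ([set x; y] == [set t.1.2; t.2])]
  = (e \in edges_before).
Proof.
have [xy _ _] := orient_neq xycO.
case: O_orient => _ _ Orot _ Ocoh.
rewrite !inE; apply/existsP/idP.
- case=> -[[a b] z] /= /and3P[/Orot bzaO /eqP -> /eqP/esym/(set2_eq_cases xy)].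
  case=> -[eb ez]; rewrite eb ez in bzaO *.
  + by rewrite (Ocoh _ _ _ _ bzaO xycO) eqxx.
  + by rewrite (Ocoh _ _ _ _ bzaO yxdO) eqxx orbT.
- case/orP=> /eqP ->; [exists (c, x, y) | exists (d, y, x)].
  + by rewrite (orient_rotr xycO) !eqxx.
  + by rewrite (orient_rotr yxdO) eqxx setUC eqxx.
Qed.

Lemma edge_followsE e :
  [exists t in O, ([set x; y] == [set t.1.1; t.1.2]) && (e == [set t.1.2; t.2])]
  = (e \in edges_after).
Proof.
have [xy _ _] := orient_neq xycO.
case: O_orient => _ _ _ _ Ocoh.
rewrite !inE; apply/existsP/idP.
- case=> -[[a b] z] /= /and3P[tO /eqP/esym/(set2_eq_cases xy) + /eqP ->].
  case=> -[ea eb]; rewrite ea eb in tO *.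
  + by rewrite (Ocoh _ _ _ _ tO xycO) eqxx.
  + by rewrite (Ocoh _ _ _ _ tO yxdO) eqxx orbT.
- case/orP=> /eqP ->; [exists (x, y, c) | exists (y, x, d)].
  + by rewrite xycO !eqxx.
  + by rewrite yxdO setUC !eqxx.
Qed.

Lemma edges_before_after_disjoint e : e \in edges_before -> e \notin edges_after.
Proof.
have [xy yc xc] := orient_neq xycO; have [_ xd yd] := orient_neq yxdO.
have cd := apexes_neq.
rewrite !inE negb_or => /orP[] /eqP ->; apply/andP; split.
- by apply: contraTneq (set22 c x) => ->; rewrite !inE negb_or xy xc.
- by apply: contraTneq (set21 c x) => ->; rewrite !inE negb_or (eq_sym c x) xc cd.
- by apply: contraTneq (set21 d y) => ->;
    rewrite !inE negb_or (eq_sym d y) (eq_sym d c) yd cd.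
- by apply: contraTneq (set22 d y) => ->; rewrite !inE negb_or (eq_sym y x) xy yd.
Qed.

Lemma edgeE_column e :
  edgeE O e [set x; y] = (e \in edges_after)%:R - (e \in edges_before)%:R.
Proof.
rewrite /edgeE edge_precedesE edge_followsE.
have [eB | eNB] := boolP (e \in edges_before).
  by rewrite (negbTE (edges_before_after_disjoint eB)) sub0r.
by rewrite subr0; case: (e \in edges_after).
Qed.

Lemma edges_before_after_sub : (edges_before :|: edges_after) \subset edges F.
Proof.
case: O_orient => Of _ _ _ _.
have [xy yc xc] := orient_neq xycO; have [_ xd yd] := orient_neq yxdO.
apply/subsetP => e; rewrite in_setU !in_set2 -!orbA.
case/or4P=> /eqP ->; [apply: set2_in_edges (Of _ xycO) _ _ _ |
  apply: set2_in_edges (Of _ yxdO) _ _ _ | apply: set2_in_edges (Of _ xycO) _ _ _ |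
  apply: set2_in_edges (Of _ yxdO) _ _ _]; by rewrite ?inE ?eqxx ?orbT // eq_sym.
Qed.

Lemma sum_incR_edgeE_column v :
  \sum_(e in edges F) incR v e * edgeE O e [set x; y] = 0.
Proof.
have [xy yc xc] := orient_neq xycO; have [_ xd yd] := orient_neq yxdO.
have cd := apexes_neq; have cx : c != x by rewrite eq_sym.
have dy : d != y by rewrite eq_sym.
have /subUsetP[sB sA] := edges_before_after_sub.
under eq_bigr => e _ do rewrite edgeE_column mulrBr.
rewrite sumrB !sum_mul_indicator // !sum_set2; first last.
- by apply: contraTneq (set21 y c) => ->; rewrite !inE negb_or (eq_sym y x) xy yd.
- by apply: contraTneq (set21 c x) => ->; rewrite !inE negb_or cd (eq_sym c y) yc.
by rewrite !incR_set2 //; ring.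
Qed.

End OrientedTriangulation.

Theorem lemma1 (V : finType) (F : {set {set V}}) (O : {set V * V * V}) :
  sphere_triangulation F -> orientation F O ->
  forall (v : V) (e' : {set V}), e' \in edges F ->
    \sum_(e in edges F) incR v e * edgeE O e e' = 0.
Proof.
move=> [F_card3 _ F_edge2 _ _] O_orient v e' e'F.
have [x [y [c [d [-> xycO yxdO]]]]] :=
  edge_opposite_faces F_card3 O_orient e'F (F_edge2 _ e'F).
exact (sum_incR_edgeE_column F_card3 O_orient xycO yxdO v).
Qed.
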